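(* Let $\mathbb S$ be the free semigroup action on the compact metric space $X$ generated by continuous maps $g_1,\dots,g_p$. Then the set $E^f_p(X,\mathbb S)$ of full entropy points of $\mathbb S$ is nonempty.
   Context: Setting: $(X,d)$ compact metric space, $g_1,\dots,g_p:X\to X$ continuous; $G_n^*$ the set of words $\underline g=g_{i_n}\cdots g_{i_1}$, $i_j\in\{1,\dots,p\}$; $d_{\underline g}(x,y)=\max_{0\le j\le n}d(g_{i_j}\cdots g_{i_1}x,g_{i_j}\cdots g_{i_1}y)$; $s(K,\underline g,\varepsilon)$ the maximal cardinality of a $(\underline g,\varepsilon)$-separated subset of $K$; $h_{top}(K,\mathbb S)=\lim_{\varepsilon\to0}\limsup_n\frac1n\log\big(p^{-n}\sum_{\underline g\in G_n^*}s(K,\underline g,\varepsilon)\big)$. A point $x_0$ is a full entropy point if $h_{top}(K,\mathbb S)=h_{top}(X,\mathbb S)$ for every closed neighbourhood $K$ of $x_0$. *)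

From HB Require Import structures.
From mathcomp Require Import all_boot all_order all_algebra.
From mathcomp Require Import all_classical all_reals all_analysis.
Set Implicit Arguments. Unset Strict Implicit. Unset Printing Implicit Defensive.
Import Order.TTheory GRing.Theory Num.Theory.
Local Open Scope classical_set_scope.
Local Open Scope ring_scope.

Section Defs.
Variables (R : realType) (X : Type) (d : X -> X -> R).

Definition is_metric : Prop :=
  [/\ forall x y, 0 <= d x y, forall x y, d x y = 0 <-> x = y,
      forall x y, d x y = d y x & forall x y z, d x z <= d x y + d y z].

Definition dball (x : X) (r : R) : set X := [set y | d x y < r].

Definition dopen (U : set X) : Prop :=
  forall x, U x -> exists2 r : R, 0 < r & dball x r `<=` U.

Definition dclosed (K : set X) : Prop := dopen (~` K).

Definition dcompact_space : Prop :=
  forall (I : Type) (U : I -> set X), (forall i, dopen (U i)) ->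
    (forall x, exists i, U i x) ->
    exists (m : nat) (f : 'I_m -> I), forall x, exists k, U (f k) x.

Definition dcontinuous (f : X -> X) : Prop :=
  forall x (e : R), 0 < e -> exists2 del : R, 0 < del &
    forall y, d x y < del -> d (f x) (f y) < e.

Definition closed_nbhd (x0 : X) (K : set X) : Prop :=
  dclosed K /\ exists U, [/\ dopen U, U x0 & U `<=` K].

Variables (p : nat) (g : 'I_p -> X -> X).

(* a word g_{i_n} ... g_{i_1} is encoded by the tuple (i_1, ..., i_n);
   word_orbit w j x = g_{i_j} ... g_{i_1} x  (j = 0 gives x) *)
Definition word_orbit n (w : n.-tuple 'I_p) (j : nat) (x : X) : X :=
  foldl (fun y i => g i y) x (take j w).

Definition dword n (w : n.-tuple 'I_p) (x y : X) : R :=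
  \big[Num.max/0]_(j < n.+1) d (word_orbit w j x) (word_orbit w j y).

(* E (a finite list of points, listed without repetition since distinct
   entries are at d_w-distance > eps >= 0) is a (w,eps)-separated subset of K *)
Definition separated n (K : set X) (w : n.-tuple 'I_p) (eps : R) (E : seq X) :=
  (forall (x0 : X) (i : nat), (i < size E)%N -> K (nth x0 E i)) /\ pairwise (fun x y => eps < dword w x y) E.

Local Open Scope ereal_scope.

Definition sep_card n (K : set X) (w : n.-tuple 'I_p) (eps : R) : \bar R :=
  ereal_sup [set (size E)%:R%:E | E in [set E | separated K w eps E]].

Definition entropy_term (K : set X) (eps : R) (n : nat) : \bar R :=
  ((n%:R)^-1)%:E * lne (((p%:R ^+ n)^-1)%:E *
                        \sum_(w : n.-tuple 'I_p) sep_card K w eps).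

Definition entropy_eps (K : set X) (eps : R) : \bar R :=
  limn_esup (entropy_term K eps).

Definition is_htop (K : set X) (h : \bar R) : Prop :=
  entropy_eps K @ 0^'+ --> h.

Definition full_entropy_point (x0 : X) : Prop :=
  forall K, closed_nbhd x0 K ->
    exists h : \bar R, is_htop K h /\ is_htop setT h.

End Defs.

(* For K ⊆ X put  htop K := sup_{eps > 0} h_eps(K),  where h_eps(K) is the
   limsup over n of the averaged separated-set growth rate.  Shrinking eps
   can only enlarge separated sets, so eps ↦ h_eps(K) is nonincreasing and
   htop K is its limit as eps → 0+: it is the topological entropy of K.

   Two properties of htop drive the proof:
   - monotonicity: K1 ⊆ K2 implies htop K1 <= htop K2;
   - max-stability: htop (A ∪ B) <= max (htop A) (htop B).  It comes from
     s(A ∪ B, w, eps) <= s(A, w, eps) + s(B, w, eps) <= 2 max(...), the factor 2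
     contributing only ln 2 / n, which vanishes in the limsup.
   If no point were a full entropy point, every x would have an open
   neighbourhood U with htop U < htop X (otherwise every closed neighbourhood
   of x, squeezed between such a U and X, would have full entropy).  A finite
   subcover and max-stability then give htop X < htop X, a contradiction. *)
From HB Require Import structures.
From mathcomp Require Import all_boot all_order all_algebra.
From mathcomp Require Import all_classical all_reals all_analysis.
Import Order.TTheory GRing.Theory Num.Theory.
Set Implicit Arguments. Unset Strict Implicit. Unset Printing Implicit Defensive.
Local Open Scope classical_set_scope.
Local Open Scope ring_scope.

Lemma nth_filter_in (T : Type) (a : pred T) (E : seq T) x0 i :
  (i < size (seq.filter a E))%N -> a (nth x0 (seq.filter a E) i) /\
  exists2 j, (j < size E)%N & nth x0 (seq.filter a E) i = nth x0 E j.
Proof.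
elim: E i => [|x E IH] i //=; case: ifP => ax.
  case: i => [|i] /= ltiE; first by split => //; exists 0%N.
  by have [ai [j ltjE Ej]] := IH i ltiE; split => //; exists j.+1.
by move=> ltiE; have [ai [j ltjE Ej]] := IH i ltiE; split => //; exists j.+1.
Qed.

Section LimsupFacts.
Variable R : realType.
Local Open Scope ereal_scope.
Implicit Types u v w : (\bar R)^nat.

Lemma limn_esup_infE u : limn_esup u = ereal_inf (range (esups u)).
Proof. by rewrite limn_esup_lim; apply/cvg_lim => //; exact: cvg_esups_inf. Qed.

Lemma limn_esup_le_esups u N : limn_esup u <= esups u N.
Proof. by rewrite limn_esup_infE; apply: ereal_inf_lbound; exists N. Qed.

Lemma le_esups u N k : (N <= k)%N -> u k <= esups u N.
Proof. by move=> leNk; apply: ereal_sup_ubound; exists k. Qed.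

Lemma limn_esup_le_eventually u v N0 :
  (forall n, (N0 <= n)%N -> u n <= v n) -> limn_esup u <= limn_esup v.
Proof.
move=> uv; rewrite [X in _ <= X]limn_esup_infE.
apply: le_ereal_inf_tmp => _ [N _ <-].
apply: le_trans (limn_esup_le_esups u (maxn N N0)) _.
apply: ge_ereal_sup => _ [k /= lek <-].
apply: le_trans (uv k _) _; first by apply: leq_trans lek; apply: leq_maxr.
by apply: le_esups; apply: leq_trans lek; apply: leq_maxl.
Qed.

Lemma limn_esup_le_max w u v :
  (forall e : R, (0 < e)%R -> exists N0, forall n, (N0 <= n)%N ->
     w n <= e%:E + maxe (u n) (v n)) ->
  limn_esup w <= maxe (limn_esup u) (limn_esup v).
Proof.
move=> wuv; apply/lee_addgt0Pr => e e0; rewrite leNgt; apply/negP => ltL.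
have [N0 wuvN0] := wuv e e0.
set L := limn_esup w in ltL.
have ltu : limn_esup u < L - e%:E.
  by rewrite lteBrDr //; apply: le_lt_trans ltL; rewrite leeD2r // le_max lexx.
have ltv : limn_esup v < L - e%:E.
  by rewrite lteBrDr //; apply: le_lt_trans ltL; rewrite leeD2r // le_max lexx orbT.
rewrite !limn_esup_infE in ltu ltv.
have [_ [N _ <-] ltuN] := ereal_inf_lt ltu.
have [_ [M _ <-] ltvM] := ereal_inf_lt ltv.
pose K := maxn (maxn N M) N0.
have leL : L <= e%:E + maxe (esups u N) (esups v M).
  apply: le_trans (limn_esup_le_esups w K) _.
  apply: ge_ereal_sup => _ [k /= lek <-].
  have leNMk : (maxn N M <= k)%N by apply: leq_trans lek; apply: leq_maxl.
  apply: le_trans (wuvN0 k _) _; first by apply: leq_trans lek; apply: leq_maxr.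
  apply: leeD2l; apply: le_max2; apply: le_esups; apply: leq_trans leNMk;
    [exact: leq_maxl | exact: leq_maxr].
move: leL; apply/negP; rewrite -ltNge.
have : maxe (esups u N) (esups v M) < L - e%:E by rewrite gt_max ltuN ltvM.
by rewrite lteBrDl // addeC.
Qed.

End LimsupFacts.

Section SeparatedSets.
Variables (R : realType) (X : Type) (d : X -> X -> R) (p : nat) (g : 'I_p -> X -> X).
Local Open Scope ereal_scope.

Lemma sep_card_ge0 n (K : set X) (w : n.-tuple 'I_p) e : 0 <= sep_card d g K w e.
Proof. by apply: ereal_sup_ubound; exists [::]. Qed.

Lemma sep_card_le n (K1 K2 : set X) (w : n.-tuple 'I_p) e1 e2 :
  K1 `<=` K2 -> (e2 <= e1)%R -> sep_card d g K1 w e1 <= sep_card d g K2 w e2.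
Proof.
move=> K12 e21; apply: ereal_sup_le => _ [E [EK Esep] <-]; exists E => //; split.
  by move=> x0 i ltiE; apply: K12; apply: EK.
by apply: sub_pairwise Esep => x y /=; apply: le_lt_trans.
Qed.

(* A separated subset of A ∪ B splits into its parts in A and outside A. *)
Lemma sep_card_setU n (A B : set X) (w : n.-tuple 'I_p) e :
  sep_card d g (A `|` B) w e <= sep_card d g A w e + sep_card d g B w e.
Proof.
apply: ge_ereal_sup => _ [E [EAB Esep] <-].
pose inA := fun x => `[< A x >].
have -> : size E = (size (seq.filter inA E) + size (seq.filter (predC inA) E))%N.
  by rewrite !size_filter count_predC.
rewrite natrD EFinD; apply: leeD; apply: ereal_sup_ubound.
  exists (seq.filter inA E) => //; split; last exact: pairwise_filter.
  by move=> x0 i lti; have [/asboolP] := nth_filter_in x0 lti.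
exists (seq.filter (predC inA) E) => //; split; last exact: pairwise_filter.
move=> x0 i lti; have [/= /asboolPn nA [j ltj Ej]] := nth_filter_in x0 lti.
by move: nA; rewrite Ej; case: (EAB x0 j ltj).
Qed.

End SeparatedSets.

Section EntropyTerm.
Variables (R : realType) (X : Type) (d : X -> X -> R) (p : nat) (g : 'I_p -> X -> X).
Local Open Scope ereal_scope.

Lemma lne_le (x y : \bar R) : x <= y -> lne x <= lne y.
Proof.
move=> xy; have [x0|x0] := leP x 0; first by rewrite le0_lneNy // leNye.
have y0 : 0 <= y by apply: le_trans xy; apply: ltW.
by rewrite lee_lne // in_itv /= leey andbT // ltW.
Qed.

Lemma lne_mul2 (y : \bar R) : 0 <= y -> lne (2%:E * y) = (ln 2)%:E + lne y.
Proof.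
rewrite le_eqVlt => /predU1P[<-|y0]; first by rewrite mule0 le0_lneNy // addeNy.
by rewrite lneM ?lne_EFin // in_itv /= leey ?andbT.
Qed.

Definition sep_sum (K : set X) (e : R) n : \bar R :=
  \sum_(w : n.-tuple 'I_p) sep_card d g K w e.

Lemma sep_sum_ge0 K e n : 0 <= sep_sum K e n.
Proof. by apply: sume_ge0 => w _; apply: sep_card_ge0. Qed.

Lemma entropy_term_le (K1 K2 : set X) (e1 e2 : R) n :
  K1 `<=` K2 -> (e2 <= e1)%R ->
  entropy_term d g K1 e1 n <= entropy_term d g K2 e2 n.
Proof.
move=> K12 e21; apply: lee_wpmul2l; first by rewrite lee_fin invr_ge0.
apply: lne_le; apply: lee_wpmul2l; first by rewrite lee_fin invr_ge0 exprn_ge0.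
by apply: lee_sum => w _; apply: sep_card_le.
Qed.

Lemma entropy_term_setU (A B : set X) (e : R) n : (0 < n)%N ->
  entropy_term d g (A `|` B) e n <=
    (ln 2 / n%:R)%:E + maxe (entropy_term d g A e n) (entropy_term d g B e n).
Proof.
move=> n0; rewrite /entropy_term -/(sep_sum _ e n).
set c := ((p%:R ^+ n)^-1)%R; have c0 : (0 <= c)%R by rewrite invr_ge0 exprn_ge0.
set a := c%:E * sep_sum A e n; set b := c%:E * sep_sum B e n.
have a0 : 0 <= a by apply: mule_ge0; rewrite ?lee_fin // sep_sum_ge0.
have b0 : 0 <= b by apply: mule_ge0; rewrite ?lee_fin // sep_sum_ge0.
have sum_le : c%:E * sep_sum (A `|` B) e n <= a + b.
  rewrite -ge0_muleDr ?sep_sum_ge0 //; apply: lee_wpmul2l; first by rewrite lee_fin.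
  by rewrite /sep_sum -big_split /=; apply: lee_sum => w _; apply: sep_card_setU.
have by_double z : 0 <= z -> a + b <= 2%:E * z ->
    ((n%:R)^-1)%:E * lne (c%:E * sep_sum (A `|` B) e n) <=
    (ln 2 / n%:R)%:E + ((n%:R)^-1)%:E * lne z.
  move=> z0 abz; apply: le_trans (lee_wpmul2l _ (lne_le (le_trans sum_le abz))) _.
    by rewrite lee_fin invr_ge0.
  by rewrite lne_mul2 // muleDr ?fin_num_adde_defr // -EFinM mulrC.
have two_mul z : 2%:E * z = z + z :> \bar R.
  by rewrite -[2%R]/(1 + 1)%R EFinD ge0_muleDl ?lee_fin // mul1e.
have [le_ab|lt_ba] := leP a b.
  apply: le_trans (by_double b b0 _) _; first by rewrite two_mul leeD2r.
  by rewrite leeD2l // le_max lexx orbT.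
apply: le_trans (by_double a a0 _) _; first by rewrite two_mul leeD2l // ltW.
by rewrite leeD2l // le_max lexx.
Qed.

End EntropyTerm.

Section TopologicalEntropy.
Variables (R : realType) (X : Type) (d : X -> X -> R) (p : nat) (g : 'I_p -> X -> X).
Local Open Scope ereal_scope.

Lemma entropy_eps_le (K1 K2 : set X) (e1 e2 : R) : K1 `<=` K2 -> (e2 <= e1)%R ->
  entropy_eps d g K1 e1 <= entropy_eps d g K2 e2.
Proof.
by move=> K12 e21; apply: (@limn_esup_le_eventually _ _ _ 0%N) => n _;
  apply: entropy_term_le.
Qed.

(* The error ln 2 / n of [entropy_term_setU] disappears in the limsup. *)
Lemma entropy_eps_setU (A B : set X) (e : R) :
  entropy_eps d g (A `|` B) e <= maxe (entropy_eps d g A e) (entropy_eps d g B e).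
Proof.
apply: limn_esup_le_max => e' e'0; exists (Num.truncn (ln 2 / e')).+1 => n len.
have n0 : (0 < n)%N by apply: leq_trans len.
apply: le_trans (entropy_term_setU d g A B e n0) _.
apply: leeD2r; rewrite lee_fin ler_pdivrMr ?ltr0n //.
have : (ln 2 / e' < n%:R)%R by apply: lt_le_trans (truncnS_gt _) _; rewrite ler_nat.
by rewrite ltr_pdivrMr // mulrC => /ltW.
Qed.

Definition htop (K : set X) : \bar R :=
  ereal_sup (entropy_eps d g K @` [set` `]0%R, +oo[]).

(* Since h_eps(K) is nonincreasing in eps, it converges to htop K as eps → 0+. *)
Lemma is_htop_htop (K : set X) : is_htop d g K (htop K).
Proof.
apply: nonincreasing_at_right_cvge => // x y.
by rewrite !in_itv /= !andbT => _ _ xy; apply: entropy_eps_le.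
Qed.

Lemma htop_le (K1 K2 : set X) : K1 `<=` K2 -> htop K1 <= htop K2.
Proof.
move=> K12; apply: ge_ereal_sup => _ [e e0 <-].
apply: le_trans (entropy_eps_le K12 (lexx e)) _.
by apply: ereal_sup_ubound; exists e.
Qed.

Lemma htop_setU (A B : set X) : htop (A `|` B) <= maxe (htop A) (htop B).
Proof.
apply: ge_ereal_sup => _ [e e0 <-]; apply: le_trans (entropy_eps_setU A B e) _.
by apply: le_max2; apply: ereal_sup_ubound; exists e.
Qed.

Lemma htop_bigcup_lt m (F : 'I_m.+1 -> set X) (c : \bar R) :
  (forall k, htop (F k) < c) -> htop [set x | exists k, F k x] < c.
Proof.
elim: m F => [|m IH] F Fc.
  by apply: le_lt_trans (Fc ord0); apply: htop_le => x [k]; rewrite (ord1 k).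
have split0 : [set x | exists k, F k x] `<=`
    F ord0 `|` [set x | exists k : 'I_m.+1, F (lift ord0 k) x].
  by move=> x [k Fkx]; case: (unliftP ord0 k) => [k' Ek|Ek]; subst k;
    [right; exists k' | left].
apply: le_lt_trans (htop_le split0) _; apply: le_lt_trans (htop_setU _ _) _.
by rewrite gt_max Fc /=; apply: IH.
Qed.

(* If every open neighbourhood of x has entropy at least htop X, then x is a
   full entropy point: each closed neighbourhood lies between such a
   neighbourhood and X. *)
Lemma full_entropy_point_of_open (x : X) :
  (forall U, dopen d U -> U x -> htop setT <= htop U) -> full_entropy_point d g x.
Proof.
move=> openU K [_ [U [Uo Ux UK]]]; exists (htop K); split; first exact: is_htop_htop.
have -> : htop K = htop setT.
  apply/eqP; rewrite eq_le htop_le //=.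
  by apply: le_trans (openU U Uo Ux) _; apply: htop_le.
exact: is_htop_htop.
Qed.

Lemma htop_lt_of_cover (c : \bar R) : dcompact_space d -> X ->
  (forall x, exists U, [/\ dopen d U, U x & htop U < c]) -> htop setT < c.
Proof.
move=> compactX x1 small.
pose I := {U : set X | dopen d U /\ htop U < c}.
have cover x : exists i : I, sval i x.
  by have [U [Uo Ux Uc]] := small x; exists (exist _ U (conj Uo Uc)).
have [[|m] [f fcover]] := compactX I sval (fun i => proj1 (svalP i)) cover.
  by have [[]] := fcover x1.
apply: le_lt_trans (htop_bigcup_lt (fun k => proj2 (svalP (f k)))).
by apply: htop_le => x _; exact: fcover.
Qed.

End TopologicalEntropy.

Theorem mainTheorem7 (R : realType) (X : Type) (d : X -> X -> R)
  (p : nat) (g : 'I_p -> X -> X) :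
  is_metric d -> dcompact_space d -> (exists x : X, True) -> (0 < p)%N ->
  (forall i, dcontinuous d (g i)) ->
  exists x0 : X, full_entropy_point d g x0.
Proof.
move=> _ compactX [x1 _] _ _; apply: contrapT => no_full.
have small x : exists U, [/\ dopen d U, U x & (htop d g U < htop d g setT)%E].
  apply: contrapT => no_small; apply: no_full; exists x.
  apply: full_entropy_point_of_open => U Uo Ux; rewrite leNgt; apply/negP => ltU.
  by apply: no_small; exists U.
by have := htop_lt_of_cover compactX x1 small; rewrite ltxx.
Qed.
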